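(* Let $(\mathbf x,\mathbf y,\mathbf z,s,u,t,\boldsymbol\delta,\boldsymbol\beta,\gamma)$ be any primal–dual feasible pair for (P-SOCP)/(D-SOCP) and let $C\subseteq[n]$ be nonempty. If $\|\mathbf q_{ij}\|\le\lambda$ for all $i,j\in C$ with $i<j$, then the minimizer $\mathbf x^*$ of (P) satisfies $\mathbf x_i^*=\mathbf x_j^*$ for all $i,j\in C$ (i.e. $C$ is a cluster or is contained in a cluster).
   Context: Data: integers $n\ge2$, $d\ge1$, points $\mathbf a_1,\dots,\mathbf a_n\in\mathbb R^d$, weights $r_1,\dots,r_n>0$, parameter $\lambda>0$; $\|\cdot\|$ Euclidean. Problem (P): minimize over $\mathbf x=(\mathbf x_1,\dots,\mathbf x_n)\in(\mathbb R^d)^n$ the strictly convex function $f'(\mathbf x)=\frac12\sum_ir_i\|\mathbf x_i-\mathbf a_i\|^2+\lambda\sum_{i<j}r_ir_j\|\mathbf x_i-\mathbf x_j\|$; its unique minimizer is $\mathbf x^*$; clusters are the equivalence classes of $i\sim j\iff\mathbf x_i^*=\mathbf x_j^*$. Antisymmetric index notation: given vectors $\mathbf v_{ij}$ for $i<j$, $\mathbf v_{\langle ij\rangle}=\mathbf v_{ij}$ ($i<j$), $-\mathbf v_{ji}$ ($i>j$), $\mathbf 0$ ($i=j$). (P-SOCP): variables $\mathbf x_i,\mathbf z_i\in\mathbb R^d$, $s_i,u_i\in\mathbb R$, $\mathbf y_{ij}\in\mathbb R^d$, $t_{ij}\in\mathbb R$ ($i<j$); minimize $\sum_i r_is_i+\lambda\sum_{i<j}r_ir_jt_{ij}$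 s.t. $\mathbf y_{ij}=\mathbf x_i-\mathbf x_j$, $\mathbf z_i=\mathbf x_i-\mathbf a_i$, $s_i=u_i+1$, $t_{ij}\ge\|\mathbf y_{ij}\|$, $s_i\ge\|(\mathbf z_i,u_i)\|$. (D-SOCP): variables $\boldsymbol\delta_{ij}$ ($i<j$), $\boldsymbol\beta_i\in\mathbb R^d$, $\gamma_i\in\mathbb R$; maximize $\sum_ir_i\mathbf a_i^T\boldsymbol\beta_i+\sum_ir_i\gamma_i$ s.t. $\sum_jr_j\boldsymbol\delta_{\langle ij\rangle}+\boldsymbol\beta_i=\mathbf 0$, $\|\boldsymbol\delta_{ij}\|\le\lambda$, $1-\gamma_i\ge\|(\boldsymbol\beta_i,\gamma_i)\|$. $\boldsymbol\sigma_2^i:=s_i\boldsymbol\beta_i+(1-\gamma_i)\mathbf z_i$, $\sigma_3^i:=s_i\gamma_i+(1-\gamma_i)u_i$, $\boldsymbol\omega_i:=\frac{\sigma_3^i}{s_i}\mathbf z_i+\frac1{s_i}\boldsymbol\sigma_2^i$, $r_C:=\sum_{i\in C}r_i$, and for $i<j$ in $C$: $\mathbf q_{ij}:=-\boldsymbol\delta_{ij}+\frac1{r_C}(\mathbf x_i-\mathbf x_j-\boldsymbol\omega_i+\boldsymbol\omega_j)-\frac1{r_C}\sum_{k\notin C}r_k(\boldsymbol\delta_{\langle ik\rangle}-\boldsymbol\delta_{\langle jk\rangle})$. *)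

From HB Require Import structures.
From mathcomp Require Import all_boot all_order all_algebra.
From mathcomp Require Import reals.
Set Implicit Arguments. Unset Strict Implicit. Unset Printing Implicit Defensive.
Import Order.TTheory GRing.Theory Num.Theory.
Local Open Scope ring_scope.

Section Defs.
Variable R : realType.

Definition vnorm (d : nat) (v : 'rV[R]_d) : R :=
  Num.sqrt (\sum_(k < d) v ord0 k ^+ 2).

(* Euclidean norm of the stacked vector (z, u) in R^(d+1) *)
Definition vnorm_ext (d : nat) (v : 'rV[R]_d) (c : R) : R :=
  Num.sqrt (\sum_(k < d) v ord0 k ^+ 2 + c ^+ 2).

Variables (n d : nat).

Definition fP (a : 'I_n -> 'rV[R]_d) (r : 'I_n -> R) (lam : R)
    (x : 'I_n -> 'rV[R]_d) : R :=
  2^-1 * (\sum_(i < n) r i * vnorm (x i - a i) ^+ 2)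
  + lam * (\sum_(i < n) \sum_(j < n | (i < j)%N) r i * r j * vnorm (x i - x j)).

Definition is_minimizer_P (a : 'I_n -> 'rV[R]_d) (r : 'I_n -> R) (lam : R)
    (xs : 'I_n -> 'rV[R]_d) : Prop :=
  forall x, fP a r lam xs <= fP a r lam x.

(* antisymmetric index notation v_<ij> from values v i j given for i < j *)
Definition anti (v : 'I_n -> 'I_n -> 'rV[R]_d) (i j : 'I_n) : 'rV[R]_d :=
  if (i < j)%N then v i j else if (j < i)%N then - v j i else 0.

Definition primal_feasible (a : 'I_n -> 'rV[R]_d)
    (x z : 'I_n -> 'rV[R]_d) (s u : 'I_n -> R)
    (y : 'I_n -> 'I_n -> 'rV[R]_d) (t : 'I_n -> 'I_n -> R) : Prop :=
  (forall i j : 'I_n, (i < j)%N -> y i j = x i - x j) /\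
  (forall i, z i = x i - a i) /\
  (forall i, s i = u i + 1) /\
  (forall i j : 'I_n, (i < j)%N -> vnorm (y i j) <= t i j) /\
  (forall i, vnorm_ext (z i) (u i) <= s i).

Definition dual_feasible (r : 'I_n -> R) (lam : R)
    (delta : 'I_n -> 'I_n -> 'rV[R]_d) (beta : 'I_n -> 'rV[R]_d)
    (gamma : 'I_n -> R) : Prop :=
  (forall i, \sum_(j < n) r j *: anti delta i j + beta i = 0) /\
  (forall i j : 'I_n, (i < j)%N -> vnorm (delta i j) <= lam) /\
  (forall i, vnorm_ext (beta i) (gamma i) <= 1 - gamma i).

Definition sigma2 (z beta : 'I_n -> 'rV[R]_d) (s gamma : 'I_n -> R) i :=
  s i *: beta i + (1 - gamma i) *: z i.

Definition sigma3 (s u gamma : 'I_n -> R) i : R :=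
  s i * gamma i + (1 - gamma i) * u i.

Definition omega (z beta : 'I_n -> 'rV[R]_d) (s u gamma : 'I_n -> R) i :=
  (sigma3 s u gamma i / s i) *: z i + (s i)^-1 *: sigma2 z beta s gamma i.

Definition rC (r : 'I_n -> R) (C : {set 'I_n}) : R := \sum_(i in C) r i.

Definition qvec (r : 'I_n -> R) (C : {set 'I_n})
    (x z : 'I_n -> 'rV[R]_d) (s u : 'I_n -> R)
    (delta : 'I_n -> 'I_n -> 'rV[R]_d) (beta : 'I_n -> 'rV[R]_d)
    (gamma : 'I_n -> R) (i j : 'I_n) : 'rV[R]_d :=
  - delta i j
  + (rC r C)^-1 *: (x i - x j - omega z beta s u gamma i + omega z beta s u gamma j)
  - (rC r C)^-1 *: (\sum_(k < n | k \notin C) r k *: (anti delta i k - anti delta j k)).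

End Defs.

From HB Require Import structures.
From mathcomp Require Import all_boot all_order all_algebra.
From mathcomp Require Import reals ring lra.
Import Order.TTheory GRing.Theory Num.Theory.
Local Open Scope ring_scope.

(* Let c be the r-weighted mean of the minimizer xs of (P) over C, and let
   x' be xs with every xs_i (i in C) replaced by c.  Comparing f'(xs) <= f'(x')
   term by term gives, with E = sum_{i in C} r_i |xs_i - c|^2,
     - fidelity term:  the change equals E - 2 sum_{i in C} r_i <xs_i - c, a_i>;
     - fusion term:    by the triangle inequality (Jensen for the norm) it drops
                       by at least B = sum_{i,j in C} r_i r_j |xs_i - xs_j|.
   If the data admit a "fusion certificate" on C, i.e.
   a_i = V + sum_{j in C} r_j Q_ij with Q antisymmetric and |Q_ij| <= lambda,
   then 2 sum r_i <xs_i - c, a_i> <= lambda B (Cauchy-Schwarz), whence E <= 0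
   and xs is constant on C (theorem [fusion_certificate]).
   Finally, any primal-dual feasible pair of the SOCP reformulation produces
   such a certificate whose entries for i < j are the vectors q_ij
   ([data_decomposition]); the hypothesis ||q_ij|| <= lambda then concludes. *)

Set Implicit Arguments. Unset Strict Implicit.

Section Dot.
Variables (R : realType) (d : nat).
Implicit Types (u v w : 'rV[R]_d).

Definition dot u v : R := \sum_(k < d) u ord0 k * v ord0 k.

Lemma dotC u v : dot u v = dot v u.
Proof. by apply: eq_bigr => k _; rewrite mulrC. Qed.

Lemma dotDl u v w : dot (u + v) w = dot u w + dot v w.
Proof. by rewrite /dot -big_split; apply: eq_bigr => k _; rewrite !mxE mulrDl. Qed.

Lemma dotNl u w : dot (- u) w = - dot u w.
Proof. by rewrite /dot -sumrN; apply: eq_bigr => k _; rewrite !mxE mulNr. Qed.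

Lemma dotBl u v w : dot (u - v) w = dot u w - dot v w.
Proof. by rewrite dotDl dotNl. Qed.

Lemma dotZl (c : R) u w : dot (c *: u) w = c * dot u w.
Proof. by rewrite /dot mulr_sumr; apply: eq_bigr => k _; rewrite !mxE mulrA. Qed.

Lemma dot0l w : dot 0 w = 0.
Proof. by rewrite /dot big1 // => k _; rewrite mxE mul0r. Qed.

Lemma dot_suml (I : finType) (P : pred I) (F : I -> 'rV[R]_d) w :
  dot (\sum_(i | P i) F i) w = \sum_(i | P i) dot (F i) w.
Proof.
rewrite /dot exchange_big /=; apply: eq_bigr => k _.
by rewrite summxE mulr_suml.
Qed.

Lemma dotDr u v w : dot w (u + v) = dot w u + dot w v.
Proof. by rewrite dotC dotDl !(dotC w). Qed.

Lemma dotBr u v w : dot w (u - v) = dot w u - dot w v.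
Proof. by rewrite dotC dotBl !(dotC w). Qed.

Lemma dotNr u w : dot w (- u) = - dot w u.
Proof. by rewrite dotC dotNl dotC. Qed.

Lemma dotZr (c : R) u w : dot w (c *: u) = c * dot w u.
Proof. by rewrite dotC dotZl dotC. Qed.

Lemma dot_sumr (I : finType) (P : pred I) (F : I -> 'rV[R]_d) w :
  dot w (\sum_(i | P i) F i) = \sum_(i | P i) dot w (F i).
Proof. by rewrite dotC dot_suml; apply: eq_bigr => i _; rewrite dotC. Qed.

Lemma dot_ge0 u : 0 <= dot u u.
Proof. by apply: sumr_ge0 => k _; rewrite -expr2 sqr_ge0. Qed.

Lemma dot_eq0 u : dot u u = 0 -> u = 0.
Proof.
move=> h; apply/rowP => k; rewrite mxE.
have /eqP := h; rewrite psumr_eq0; last by move=> i _; rewrite -expr2 sqr_ge0.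
move/allP/(_ k (mem_index_enum _)); rewrite -expr2 sqrf_eq0 => /eqP.
by rewrite (ord1 ord0).
Qed.

Lemma vnormE u : vnorm u = Num.sqrt (dot u u).
Proof. by rewrite /vnorm /dot; congr Num.sqrt; apply: eq_bigr => k _; rewrite expr2. Qed.

Lemma vnorm_sq u : vnorm u ^+ 2 = dot u u.
Proof. by rewrite vnormE sqr_sqrtr // dot_ge0. Qed.

Lemma vnorm_ge0 u : 0 <= vnorm u.
Proof. by rewrite vnormE sqrtr_ge0. Qed.

Lemma vnormN u : vnorm (- u) = vnorm u.
Proof. by rewrite !vnormE dotNl dotNr opprK. Qed.

Lemma vnormB u v : vnorm (u - v) = vnorm (v - u).
Proof. by rewrite -vnormN opprB. Qed.

Lemma vnorm0 : vnorm (0 : 'rV[R]_d) = 0.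
Proof. by rewrite vnormE dot0l sqrtr0. Qed.

Lemma dot_shift_sq e c b :
  dot (e + c - b) (e + c - b) - dot (c - b) (c - b)
    = dot e e + 2 * dot e c - 2 * dot e b.
Proof.
rewrite !(dotDl, dotBl, dotDr, dotBr, dotNl, dotNr) ?(dotC c e) ?(dotC b e) ?(dotC b c).
ring.
Qed.

(* Cauchy-Schwarz, squared form: expand |A v - P u|^2 >= 0 with A = <u,u>,
   P = <u,v>. *)
Lemma cauchy_schwarz_sq u v : dot u v ^+ 2 <= dot u u * dot v v.
Proof.
set A := dot u u; set B := dot v v; set P := dot u v.
have [A0|Aneq0] := eqVneq A 0.
  by rewrite /P (dot_eq0 A0) dot0l expr0n /= mulr_ge0 ?dot_ge0.
have Apos : 0 < A by rewrite lt0r Aneq0 dot_ge0.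
have h := dot_ge0 (A *: v - P *: u).
rewrite !(dotBl, dotBr, dotZl, dotZr) -/A -/B -/P (dotC v u) -/P in h.
have expand : A * (A * B - P * P) - P * (A * P - P * A) = A * (A * B - P ^+ 2).
  by ring.
by rewrite expand pmulr_rge0 // subr_ge0 in h.
Qed.

Lemma cauchy_schwarz u v : dot u v <= vnorm u * vnorm v.
Proof.
have [hP|hP] := lerP (dot u v) 0.
  by apply: le_trans hP _; rewrite mulr_ge0 ?vnorm_ge0.
rewrite !vnormE -sqrtrM ?dot_ge0 //.
rewrite -(ger0_norm (ltW hP)) -sqrtr_sqr ler_sqrt ?cauchy_schwarz_sq //.
by rewrite mulr_ge0 ?dot_ge0.
Qed.

End Dot.

Lemma sum_pairs_half (R : numFieldType) n (F : 'I_n -> 'I_n -> R)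
    (Fsym : forall i j, F i j = F j i) (Fdiag : forall i, F i i = 0) :
  \sum_(i < n) \sum_(j < n | (i < j)%N) F i j
    = 2^-1 * \sum_(i < n) \sum_(j < n) F i j.
Proof.
pose U := \sum_(i < n) \sum_(j < n) (if (i < j)%N then F i j else 0).
have eU : \sum_(i < n) \sum_(j < n | (i < j)%N) F i j = U.
  by apply: eq_bigr => i _; rewrite big_mkcond.
have eL : \sum_(i < n) \sum_(j < n) (if (j < i)%N then F i j else 0) = U.
  rewrite exchange_big; apply: eq_bigr => i _; apply: eq_bigr => j _.
  by rewrite Fsym.
have split_diag : \sum_(i < n) \sum_(j < n) F i j
    = U + \sum_(i < n) \sum_(j < n) (if (j < i)%N then F i j else 0).
  rewrite -big_split; apply: eq_bigr => i _; rewrite -big_split.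
  apply: eq_bigr => j _ /=.
  case: ltngtP => h; rewrite ?addr0 ?add0r //.
  by rewrite (val_inj h) Fdiag.
by rewrite eU split_diag eL mulrDr [2^-1 * U]mulrC -splitr.
Qed.

Lemma fP_sub (R : realType) n d (a : 'I_n -> 'rV[R]_d) (r : 'I_n -> R)
    (lam : R) (v w : 'I_n -> 'rV[R]_d) :
  fP a r lam v - fP a r lam w =
  2^-1 * ((\sum_(i < n) r i * vnorm (v i - a i) ^+ 2
           - \sum_(i < n) r i * vnorm (w i - a i) ^+ 2)
          + lam * \sum_(i < n) \sum_(j < n)
                    r i * r j * (vnorm (v i - v j) - vnorm (w i - w j))).
Proof.
have pairs (p : 'I_n -> 'rV[R]_d) :
    \sum_(i < n) \sum_(j < n | (i < j)%N) r i * r j * vnorm (p i - p j)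
    = 2^-1 * \sum_(i < n) \sum_(j < n) r i * r j * vnorm (p i - p j).
  apply: sum_pairs_half => [i j|i]; first by rewrite vnormB (mulrC (r i)).
  by rewrite subrr vnorm0 mulr0.
have diff : \sum_(i < n) \sum_(j < n)
      r i * r j * (vnorm (v i - v j) - vnorm (w i - w j))
    = \sum_(i < n) \sum_(j < n) r i * r j * vnorm (v i - v j)
      - \sum_(i < n) \sum_(j < n) r i * r j * vnorm (w i - w j).
  rewrite -sumrB; apply: eq_bigr => i _; rewrite -sumrB.
  by apply: eq_bigr => j _; rewrite mulrBr.
rewrite /fP !pairs diff; ring.
Qed.

Lemma rC_gt0 (R : realType) n (r : 'I_n -> R) (C : {set 'I_n})
    (hr : forall i, 0 < r i) : C != set0 -> 0 < rC r C.
Proof.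
case/set0Pn=> i0 i0C; rewrite /rC (bigD1 i0) //=.
by rewrite ltr_pwDl ?hr // sumr_ge0 // => i _; apply: ltW.
Qed.

Section Collapse.
Variables (R : realType) (n d : nat) (r : 'I_n -> R) (C : {set 'I_n}).
Hypothesis hr : forall i, 0 < r i.
Hypothesis hrC : 0 < rC r C.
Implicit Types (v a : 'I_n -> 'rV[R]_d).

Definition wmean v : 'rV[R]_d := (rC r C)^-1 *: \sum_(i in C) r i *: v i.

Definition collapse v (i : 'I_n) : 'rV[R]_d := if i \in C then wmean v else v i.

Lemma wmean_centered v : \sum_(i in C) r i *: (v i - wmean v) = 0.
Proof.
have -> : \sum_(i in C) r i *: (v i - wmean v)
    = \sum_(i in C) r i *: v i - rC r C *: wmean v.
  by rewrite /rC scaler_suml -sumrB; apply: eq_bigr => i _; rewrite scalerBr.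
by rewrite /wmean scalerA mulfV ?gt_eqF // scale1r subrr.
Qed.

Lemma dot_centered v (w : 'rV[R]_d) :
  \sum_(i in C) r i * dot (v i - wmean v) w = 0.
Proof.
rewrite -[RHS](dot0l w) -(wmean_centered v) dot_suml.
by apply: eq_bigr => i _; rewrite dotZl.
Qed.

Lemma wmean_dist_le v (y : 'rV[R]_d) :
  rC r C * vnorm (wmean v - y) <= \sum_(i in C) r i * vnorm (v i - y).
Proof.
set w := wmean v - y.
have ew : w = (rC r C)^-1 *: \sum_(i in C) r i *: (v i - y).
  have -> : \sum_(i in C) r i *: (v i - y)
      = \sum_(i in C) r i *: v i - rC r C *: y.
    by rewrite /rC scaler_suml -sumrB; apply: eq_bigr => i _; rewrite scalerBr.
  by rewrite scalerBr scalerA mulVf ?scale1r // gt_eqF.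
have hS : 0 <= \sum_(i in C) r i * vnorm (v i - y).
  by apply: sumr_ge0 => i _; rewrite mulr_ge0 ?vnorm_ge0 // ltW.
have [w0|wneq0] := eqVneq (vnorm w) 0; first by rewrite w0 mulr0.
have wpos : 0 < vnorm w by rewrite lt0r wneq0 vnorm_ge0.
have h : vnorm w ^+ 2 <=
    (rC r C)^-1 * (\sum_(i in C) r i * vnorm (v i - y)) * vnorm w.
  rewrite vnorm_sq {1}ew dotZl dot_suml -mulrA ler_pM2l ?invr_gt0 //.
  rewrite mulr_suml; apply: ler_sum => i _.
  by rewrite dotZl -mulrA ler_pM2l ?cauchy_schwarz.
rewrite expr2 ler_pM2r // in h.
have inv_pos : 0 < (rC r C)^-1 by rewrite invr_gt0.
by rewrite -(ler_pM2l inv_pos) mulrA mulVf ?mul1r ?gt_eqF.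
Qed.

Lemma wmean_dist_gain v (y : 'rV[R]_d) :
  0 <= \sum_(i in C) r i * (vnorm (v i - y) - vnorm (wmean v - y)).
Proof.
under eq_bigr do rewrite mulrBr.
by rewrite sumrB -mulr_suml subr_ge0 wmean_dist_le.
Qed.

Lemma collapse_fusion_gain v :
  \sum_(i in C) \sum_(j in C) r i * r j * vnorm (v i - v j) <=
  \sum_(i < n) \sum_(j < n)
     r i * r j * (vnorm (v i - v j) - vnorm (collapse v i - collapse v j)).
Proof.
set c := wmean v.
rewrite [X in _ <= X](bigID (fun i => i \in C)) /=.
rewrite [X in _ <= X + _](eq_bigr (fun i =>
    \sum_(j in C) r i * r j * vnorm (v i - v j) +
    \sum_(j | j \notin C) r i * r j * (vnorm (v i - v j) - vnorm (c - v j))));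
  last first.
  move=> i iC; rewrite [LHS](bigID (fun j => j \in C)) /=; congr (_ + _).
    by apply: eq_bigr => j jC; rewrite /collapse iC jC subrr vnorm0 subr0.
  by apply: eq_bigr => j jC; rewrite /collapse iC (negbTE jC).
rewrite [X in _ <= _ + X](eq_bigr (fun i =>
    \sum_(j in C) r i * r j * (vnorm (v j - v i) - vnorm (c - v i))));
  last first.
  move=> i iC; rewrite [LHS](bigID (fun j => j \in C)) /=.
  rewrite [X in _ + X]big1 ?addr0; last first.
    by move=> j jC; rewrite /collapse (negbTE iC) (negbTE jC) subrr mulr0.
  by apply: eq_bigr => j jC; rewrite /collapse (negbTE iC) jC vnormB (vnormB c).
rewrite big_split /= -addrA lerDl.
apply: addr_ge0.
  rewrite exchange_big /=; apply: sumr_ge0 => j jC.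
  rewrite (eq_bigr (fun i => r j * (r i * (vnorm (v i - v j) - vnorm (c - v j)))));
    last by move=> i _; rewrite (mulrC (r i)) mulrA.
  by rewrite -mulr_sumr mulr_ge0 ?(ltW (hr _)) ?wmean_dist_gain.
apply: sumr_ge0 => i _.
rewrite (eq_bigr (fun j => r i * (r j * (vnorm (v j - v i) - vnorm (c - v i)))));
  last by move=> j _; rewrite mulrA.
by rewrite -mulr_sumr mulr_ge0 ?(ltW (hr _)) ?wmean_dist_gain.
Qed.

Lemma collapse_fit_change v a :
  \sum_(i < n) r i * vnorm (v i - a i) ^+ 2
    - \sum_(i < n) r i * vnorm (collapse v i - a i) ^+ 2
  = \sum_(i in C) r i * dot (v i - wmean v) (v i - wmean v)
    - 2 * \sum_(i in C) r i * dot (v i - wmean v) (a i).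
Proof.
set c := wmean v.
rewrite -sumrB (bigID (fun i => i \in C)) /=.
rewrite [X in _ + X]big1 ?addr0; last first.
  by move=> i iC; rewrite /collapse (negbTE iC) subrr.
rewrite (eq_bigr (fun i => r i * dot (v i - c) (v i - c)
      + 2 * (r i * dot (v i - c) c) - 2 * (r i * dot (v i - c) (a i))));
  last first.
  move=> i iC; rewrite /collapse iC -/c !vnorm_sq -mulrBr.
  by have := dot_shift_sq (v i - c) c (a i); rewrite subrK => ->; ring.
by rewrite sumrB big_split /= -!mulr_sumr dot_centered mulr0 addr0.
Qed.

Lemma certificate_correlation_le v a (Q : 'I_n -> 'I_n -> 'rV[R]_d)
    (V : 'rV[R]_d) (lam : R)
    (hQa : forall i, i \in C -> a i = V + \sum_(j in C) r j *: Q i j)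
    (hQs : forall i j, Q j i = - Q i j)
    (hQb : forall i j, i \in C -> j \in C -> vnorm (Q i j) <= lam) :
  2 * \sum_(i in C) r i * dot (v i - wmean v) (a i)
    <= lam * \sum_(i in C) \sum_(j in C) r i * r j * vnorm (v i - v j).
Proof.
set c := wmean v.
set S := \sum_(i in C) \sum_(j in C) r i * r j * dot (v i - c) (Q i j).
have eS : \sum_(i in C) r i * dot (v i - c) (a i) = S.
  rewrite (eq_bigr (fun i => r i * dot (v i - c) V +
      \sum_(j in C) r i * r j * dot (v i - c) (Q i j))); last first.
    move=> i iC; rewrite hQa // dotDr dot_sumr mulrDr; congr (_ + _).
    by rewrite mulr_sumr; apply: eq_bigr => j _; rewrite dotZr mulrA.
  by rewrite big_split /= dot_centered add0r.
have eS_swap :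
    S = - \sum_(i in C) \sum_(j in C) r i * r j * dot (v j - c) (Q i j).
  rewrite /S exchange_big /= -sumrN; apply: eq_bigr => i _.
  rewrite -sumrN; apply: eq_bigr => j _.
  by rewrite hQs dotNr mulrN (mulrC (r j)).
have e2S : 2 * S
    = \sum_(i in C) \sum_(j in C) r i * r j * dot (v i - v j) (Q i j).
  have -> : 2 * S = S + S by ring.
  rewrite {2}eS_swap /S -sumrB.
  apply: eq_bigr => i _; rewrite -sumrB; apply: eq_bigr => j _.
  rewrite -mulrBr -dotBl; congr (_ * dot _ _).
  by rewrite opprB addrA subrK.
rewrite eS e2S mulr_sumr; apply: ler_sum => i iC.
rewrite mulr_sumr; apply: ler_sum => j jC.
rewrite mulrCA ler_pM2l ?mulr_gt0 //.
apply: (le_trans (cauchy_schwarz _ _)); rewrite mulrC ler_wpM2r ?vnorm_ge0 //.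
exact: hQb.
Qed.

Theorem fusion_certificate a (lam : R) (hlam : 0 <= lam) xs
    (hxs : is_minimizer_P a r lam xs)
    (Q : 'I_n -> 'I_n -> 'rV[R]_d) (V : 'rV[R]_d)
    (hQa : forall i, i \in C -> a i = V + \sum_(j in C) r j *: Q i j)
    (hQs : forall i j, Q j i = - Q i j)
    (hQb : forall i j, i \in C -> j \in C -> vnorm (Q i j) <= lam) :
  forall i, i \in C -> xs i = wmean xs.
Proof.
set c := wmean xs.
set E := \sum_(i in C) r i * dot (xs i - c) (xs i - c).
set T := \sum_(i in C) r i * dot (xs i - c) (a i).
set B := \sum_(i in C) \sum_(j in C) r i * r j * vnorm (xs i - xs j).
set G := \sum_(i < n) \sum_(j < n)
  r i * r j * (vnorm (xs i - xs j) - vnorm (collapse xs i - collapse xs j)).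
have optimality : 2^-1 * ((E - 2 * T) + lam * G) <= 0.
  by rewrite -collapse_fit_change -fP_sub subr_le0 hxs.
have fusion_gain : lam * B <= lam * G by rewrite ler_wpM2l ?collapse_fusion_gain.
have correlation : 2 * T <= lam * B := certificate_correlation_le xs hQa hQs hQb.
have E_le0 : E <= 0 by lra.
have term_eq0 i : i \in C -> r i * dot (xs i - c) (xs i - c) = 0.
  move=> iC; apply/eqP; rewrite eq_le; apply/andP; split;
    last by rewrite mulr_ge0 ?dot_ge0 ?ltW.
  apply: le_trans E_le0; rewrite /E (bigD1 i) //= lerDl.
  by apply: sumr_ge0 => k _; rewrite mulr_ge0 ?dot_ge0 ?ltW.
move=> i /term_eq0 /eqP; rewrite mulf_eq0 gt_eqF //= => /eqP /dot_eq0 /eqP.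
by rewrite subr_eq0 => /eqP.
Qed.

End Collapse.

Lemma anti_sym (R : realType) n d (v : 'I_n -> 'I_n -> 'rV[R]_d) i j :
  anti v j i = - anti v i j.
Proof. by rewrite /anti; case: ltngtP => h; rewrite ?opprK ?oppr0. Qed.

Lemma anti_diag (R : realType) n d (v : 'I_n -> 'I_n -> 'rV[R]_d) i :
  anti v i i = 0.
Proof. by rewrite /anti ltnn. Qed.

Section SOCPCertificate.
Variables (R : realType) (n d : nat).
Variables (a : 'I_n -> 'rV[R]_d) (r : 'I_n -> R) (lam : R).
Variables (x z : 'I_n -> 'rV[R]_d) (s u : 'I_n -> R).
Variables (y : 'I_n -> 'I_n -> 'rV[R]_d) (t : 'I_n -> 'I_n -> R).
Variables (delta : 'I_n -> 'I_n -> 'rV[R]_d) (beta : 'I_n -> 'rV[R]_d).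
Variables (gamma : 'I_n -> R) (C : {set 'I_n}).

Let om := omega z beta s u gamma.
Let dl := anti delta.

(* The cone constraint s_i >= ||(z_i, u_i)|| >= |u_i| with s_i = u_i + 1 forces
   s_i > 0 (indeed s_i >= 1/2). *)
Lemma primal_s_neq0 : primal_feasible a x z s u y t -> forall i, s i != 0.
Proof.
case=> _ [_ [hs [_ hsu]]] i.
have hz : 0 <= \sum_(k < d) z i ord0 k ^+ 2 by apply: sumr_ge0 => k _; apply: sqr_ge0.
have abs_u : `|u i| <= s i.
  apply: le_trans (hsu i); rewrite /vnorm_ext -sqrtr_sqr.
  by rewrite ler_sqrt ?addr_ge0 ?sqr_ge0 // lerDr.
have := ler_norm (- u i); rewrite normrN => hu.
by apply/eqP => s0; have := hs i; lra.
Qed.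

Lemma omega_primal : primal_feasible a x z s u y t ->
  forall i, om i = x i - a i + beta i.
Proof.
move=> hP i; have s0 := primal_s_neq0 hP i.
case: hP => _ [hz [hs _]].
rewrite -hz; apply/rowP => k; rewrite /om /omega /sigma2 /sigma3 !mxE.
by move: s0; rewrite hs => s0; field.
Qed.

(* The certificate: anchors V_i and the antisymmetric family Q_ij extending
   the vectors q_ij of the paper to all pairs of indices. *)
Definition anchor (i : 'I_n) : 'rV[R]_d :=
  x i - om i - \sum_(k | k \notin C) r k *: dl i k.

Definition qfull (i j : 'I_n) : 'rV[R]_d :=
  - dl i j + (rC r C)^-1 *: (anchor i - anchor j).

Lemma qvec_qfull (i j : 'I_n) : (i < j)%N ->
  qvec r C x z s u delta beta gamma i j = qfull i j.
Proof.
move=> ij; rewrite /qvec /qfull /anchor.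
have -> : delta i j = dl i j by rewrite /dl /anti ij.
have -> : \sum_(k < n | k \notin C) r k *: (anti delta i k - anti delta j k) =
    \sum_(k < n | k \notin C) r k *: dl i k
    - \sum_(k < n | k \notin C) r k *: dl j k.
  by rewrite -sumrB; apply: eq_bigr => k _; rewrite scalerBr.
by apply/rowP => m; rewrite !mxE; ring.
Qed.

Lemma qfull_anti (i j : 'I_n) : qfull j i = - qfull i j.
Proof. by rewrite /qfull /dl anti_sym; apply/rowP => m; rewrite !mxE; ring. Qed.

Lemma qfull_bound : 0 <= lam ->
  (forall i j, i \in C -> j \in C -> (i < j)%N ->
     vnorm (qvec r C x z s u delta beta gamma i j) <= lam) ->
  forall i j, i \in C -> j \in C -> vnorm (qfull i j) <= lam.
Proof.
move=> hlam hq i j iC jC; case: (ltngtP i j) => h.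
- by rewrite -qvec_qfull // hq.
- by rewrite -vnormN -qfull_anti -qvec_qfull // hq.
- by rewrite (val_inj h) /qfull /dl anti_diag subrr scaler0 oppr0 addr0 vnorm0.
Qed.

(* Dual stationarity sum_j r_j delta_<ij> + beta_i = 0 turns the anchors into
   the data plus the within-C part of the dual variables. *)
Lemma anchor_primal_dual : primal_feasible a x z s u y t ->
  dual_feasible r lam delta beta gamma ->
  forall i, anchor i = a i + \sum_(k in C) r k *: dl i k.
Proof.
move=> hP [hstat _] i.
have hbeta : beta i = - (\sum_(k in C) r k *: dl i k
                         + \sum_(k | k \notin C) r k *: dl i k).
  have := hstat i; rewrite (bigID (fun k => k \in C)) /= addrC => /eqP.
  by rewrite addr_eq0 => /eqP ->; rewrite opprK.
rewrite /anchor omega_primal // hbeta.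
by apply/rowP => m; rewrite !mxE; ring.
Qed.

Lemma data_decomposition : 0 < rC r C ->
  primal_feasible a x z s u y t -> dual_feasible r lam delta beta gamma ->
  forall i, i \in C -> a i = wmean r C anchor + \sum_(j in C) r j *: qfull i j.
Proof.
move=> hrC hP hD i iC.
rewrite (eq_bigr (fun j => - (r j *: dl i j) + ((rC r C)^-1 * r j) *: anchor i
                           - (rC r C)^-1 *: (r j *: anchor j))); last first.
  by move=> j _; rewrite /qfull; apply/rowP => m; rewrite !mxE; ring.
rewrite sumrB big_split /= sumrN -scaler_suml -scaler_sumr -mulr_sumr.
rewrite mulVf ?gt_eqF // scale1r anchor_primal_dual //.
by rewrite /wmean; apply/rowP => m; rewrite !mxE; ring.
Qed.

End SOCPCertificate.

Unset Implicit Arguments. Set Strict Implicit.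

Theorem mainTheorem2 (R : realType) (n d : nat) (hn : (2 <= n)%N) (hd : (1 <= d)%N)
    (a : 'I_n -> 'rV[R]_d) (r : 'I_n -> R) (hr : forall i, 0 < r i)
    (lam : R) (hlam : 0 < lam)
    (x z : 'I_n -> 'rV[R]_d) (s u : 'I_n -> R)
    (y : 'I_n -> 'I_n -> 'rV[R]_d) (t : 'I_n -> 'I_n -> R)
    (delta : 'I_n -> 'I_n -> 'rV[R]_d) (beta : 'I_n -> 'rV[R]_d)
    (gamma : 'I_n -> R)
    (hP : primal_feasible a x z s u y t)
    (hD : dual_feasible r lam delta beta gamma)
    (C : {set 'I_n}) (hC : C != set0)
    (hq : forall i j : 'I_n, i \in C -> j \in C -> (i < j)%N ->
            vnorm (qvec r C x z s u delta beta gamma i j) <= lam)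
    (xs : 'I_n -> 'rV[R]_d) (hxs : is_minimizer_P a r lam xs) :
  forall i j : 'I_n, i \in C -> j \in C -> xs i = xs j.
Proof.
have hrC := rC_gt0 hr hC.
have hxs_mean := fusion_certificate hr hrC (ltW hlam) hxs
  (data_decomposition hrC hP hD) (qfull_anti r x z s u delta beta gamma C)
  (qfull_bound (ltW hlam) hq).
by move=> i j iC jC; rewrite !hxs_mean.
Qed.
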